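(* For integers $n\geqslant 1$ and $m\geqslant 0$ let $\delta_{n,m}$ be the number of M-partitions $\lambda$ of type $(n,n,m)$ with $\lambda_{=2}=\{\mathbf e_1+\mathbf e_i: i=1,\dots,n\}\subset\mathbb N^n$ (with $\delta_{n,0}=0$). Then $\Phi_n(t)=\sum_{m\geqslant 0}\delta_{n,m}t^m$ satisfies \[ \Phi_1(t)=\sum_{i\geqslant 1}t^i,\qquad \Phi_n(t)=\sum_{i\geqslant 1}t^{\,i+n-2}\Big(\frac{1-t^i}{1-t}\Big)^{n-1}\quad(n\geqslant 2). \]
   Context: Let $\mathbb N=\mathbb Z_{\geqslant 0}$ with the componentwise order and $\mathbf e_i$ the standard basis vectors. $\mathrm P^n_d$ is the set of subsets $\lambda\subset\mathbb N^n$ of size $d$ closed downward. The degree of a point is the sum of its coordinates; $\lambda_{=i}$, $\lambda_{\geqslant i}$ are the elements of degree $i$, resp. $\geqslant i$; $h_\lambda(i)=|\lambda_{=i}|$; $\mathrm{Soc}(\lambda)$ is the set of maximal elements. For positive integers $k,q,m$, an M-partition of type $(k,q,m)$ is $\lambda\in\mathrm P^k_{1+k+q+m}$ with $\mathrm{Soc}(\lambda)\subset\lambda_{\geqslant3}$, $h_\lambda(1)=k$, $h_\lambda(2)=q$, $\sum_{i\geqslant3}h_\lambda(i)=m$. *)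

From HB Require Import structures.
From mathcomp Require Import all_boot all_order ssralg ssrint poly finmap.
Set Implicit Arguments. Unset Strict Implicit. Unset Printing Implicit Defensive.
Import GRing.Theory.
Local Open Scope fset_scope.

Notation pt n := {ffun 'I_n -> nat}.

Definition ple n (x y : pt n) : bool := [forall i, x i <= y i].

(* standard basis vector e_{i+1} (0-indexed: e 0 is e_1) *)
Definition ebasis n (i : nat) : pt n := [ffun j : 'I_n => nat_of_bool (val j == i)].

Definition padd n (x y : pt n) : pt n := [ffun j => (x j + y j)%N].

Definition pdeg n (x : pt n) : nat := (\sum_(i < n) x i)%N.

Definition layer_eq n (lam : {fset pt n}) (i : nat) : {fset pt n} :=
  [fset x in lam | pdeg x == i].
Definition layer_ge n (lam : {fset pt n}) (i : nat) : {fset pt n} :=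
  [fset x in lam | i <= pdeg x].

Definition hfun n (lam : {fset pt n}) (i : nat) : nat := #|` layer_eq lam i|.

Definition down_closed n (lam : {fset pt n}) : Prop :=
  forall x y : pt n, y \in lam -> ple x y -> x \in lam.

Definition in_P n (d : nat) (lam : {fset pt n}) : Prop :=
  down_closed lam /\ #|` lam| = d.

Definition is_soc n (lam : {fset pt n}) (x : pt n) : Prop :=
  x \in lam /\ forall y, y \in lam -> ple x y -> y = x.

Definition Mpartition (k q m : nat) (lam : {fset pt k}) : Prop :=
  [/\ 0 < k, 0 < q & 0 < m] /\
  [/\ in_P (1 + k + q + m) lam,
      (forall x, is_soc lam x -> x \in layer_ge lam 3),
      hfun lam 1 = k,
      hfun lam 2 = q &
      #|` layer_ge lam 3| = m].

Arguments Mpartition : clear implicits.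

Definition delta_set (n m : nat) (lam : {fset pt n}) : Prop :=
  Mpartition n n m lam /\
  (forall x : pt n, x \in layer_eq lam 2 <->
     exists i : 'I_n, x = padd (ebasis n 0) (ebasis n (val i))).
Arguments delta_set : clear implicits.

(* As lambda_{=2} contains no e_i + e_j with i, j >= 2, down-closure forces
   every point of lambda to be a e_1 or a e_1 + e_j: lambda is a comb with
   spine {a e_1 : a <= A} and teeth {a e_1 + e_j : a <= B_j}.  The socle
   condition amounts to 2 <= B_j <= A, and then m = (A - 2) + sum_j (B_j - 1).
   Writing A = i + 1 and B_j = t_j + 2 with t_j < i, this reads
   m = i + n - 2 + sum_j t_j, so the combs with a given A are counted by the
   coefficient of t^m in t^(i+n-2) (1 + ... + t^(i-1))^(n-1). *)

From mathcomp Require Import all_boot ssralg ssrint poly finmap.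
From mathcomp Require Import zify.
Set Implicit Arguments. Unset Strict Implicit. Unset Printing Implicit Defensive.
Import GRing.Theory.
Local Open Scope fset_scope.
Local Open Scope nat_scope.

Section Points.

Variable k : nat.
Implicit Types (x y : pt k.+1) (a b : nat) (i j : 'I_k).

(* Coordinate [ord0] is the e_1 direction and [lift ord0 i] is e_(i+2). *)
Definition axis_pt a : pt k.+1 := [ffun j => if j == ord0 then a else 0].

Definition arm_pt a i : pt k.+1 :=
  [ffun j => if j == ord0 then a else nat_of_bool (j == lift ord0 i)].

Lemma axis_pt0 a : axis_pt a ord0 = a. Proof. by rewrite ffunE eqxx. Qed.
Lemma axis_ptS a j : axis_pt a (lift ord0 j) = 0. Proof. by rewrite ffunE. Qed.
Lemma arm_pt0 a i : arm_pt a i ord0 = a. Proof. by rewrite ffunE eqxx. Qed.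
Lemma arm_ptS a i j : arm_pt a i (lift ord0 j) = nat_of_bool (j == i).
Proof. by rewrite ffunE /= (inj_eq (@lift_inj _ ord0)). Qed.

Lemma pt_lift_ext x y :
  x ord0 = y ord0 -> (forall j, x (lift ord0 j) = y (lift ord0 j)) -> x = y.
Proof. by move=> e0 eS; apply/ffunP => j; case: (unliftP ord0 j) => [j'|] ->. Qed.

Lemma ple_lift x y :
  ple x y = (x ord0 <= y ord0) && [forall j, x (lift ord0 j) <= y (lift ord0 j)].
Proof.
apply/forallP/andP => [le_xy|[le0 /forallP leS] j]; first by split => //; apply/forallP.
by case: (unliftP ord0 j) => [j'|] ->.
Qed.

Lemma pdeg_lift x : pdeg x = x ord0 + \sum_(j < k) x (lift ord0 j).
Proof. by rewrite /pdeg big_ord_recl. Qed.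

Lemma sum_indicator i : \sum_(j < k) nat_of_bool (j == i) = 1.
Proof. by rewrite (bigD1 i) //= eqxx big1 // => j /negPf ->. Qed.

Lemma pdeg_axis_pt a : pdeg (axis_pt a) = a.
Proof. by rewrite pdeg_lift axis_pt0 big1 ?addn0 // => j _; rewrite axis_ptS. Qed.

Lemma pdeg_arm_pt a i : pdeg (arm_pt a i) = a.+1.
Proof.
by rewrite pdeg_lift arm_pt0; under eq_bigr do rewrite arm_ptS; rewrite sum_indicator addn1.
Qed.

Lemma axis_pt_inj : injective axis_pt.
Proof. by move=> a b /(congr1 (fun x => x ord0)); rewrite !axis_pt0. Qed.

Lemma arm_pt_inj a b i j : arm_pt a i = arm_pt b j -> a = b /\ i = j.
Proof.
move=> e; have := congr1 (fun x => x ord0) e; have := congr1 (fun x => x (lift ord0 i)) e.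
by rewrite !arm_pt0 !arm_ptS eqxx; case: eqP.
Qed.

Lemma axis_pt_neq_arm_pt a b i : axis_pt a <> arm_pt b i.
Proof. by move/(congr1 (fun x => x (lift ord0 i))); rewrite axis_ptS arm_ptS eqxx. Qed.

Lemma ple_axis_ptl a y : ple (axis_pt a) y = (a <= y ord0).
Proof.
by rewrite ple_lift axis_pt0; case: (a <= _) => //=; apply/forallP => j; rewrite axis_ptS.
Qed.

Lemma ple_arm_ptl a i y : ple (arm_pt a i) y = (a <= y ord0) && (0 < y (lift ord0 i)).
Proof.
rewrite ple_lift arm_pt0; case: (a <= _) => //=.
apply/forallP/idP => [/(_ i)|pos_i j]; first by rewrite arm_ptS eqxx.
by rewrite arm_ptS; case: eqP => [->|].
Qed.

Lemma axis_ptE x : (forall j, x (lift ord0 j) = 0) -> x = axis_pt (x ord0).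
Proof. by move=> x0; apply: pt_lift_ext => [|j]; rewrite ?axis_pt0 ?axis_ptS ?x0. Qed.

Lemma arm_ptE x i : x (lift ord0 i) = 1 ->
  (forall j, j != i -> x (lift ord0 j) = 0) -> x = arm_pt (x ord0) i.
Proof.
move=> xi1 x0; apply: pt_lift_ext => [|j]; rewrite ?arm_pt0 ?arm_ptS //.
by case: eqP => [->|/eqP /x0].
Qed.

Lemma ple_axis_ptr x a : ple x (axis_pt a) -> x = axis_pt (x ord0) /\ x ord0 <= a.
Proof.
rewrite ple_lift axis_pt0 => /andP[le0 /forallP leS]; split => //; apply: axis_ptE => j.
by have := leS j; rewrite axis_ptS; case: (x _).
Qed.

Lemma ple_arm_ptr x a i : ple x (arm_pt a i) ->
  x ord0 <= a /\ (x = axis_pt (x ord0) \/ x = arm_pt (x ord0) i).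
Proof.
rewrite ple_lift arm_pt0 => /andP[le0 /forallP leS]; split => //.
have x0 j : j != i -> x (lift ord0 j) = 0.
  by move=> /negPf ji; have := leS j; rewrite arm_ptS ji; case: (x _).
have := leS i; rewrite arm_ptS eqxx; case xi: (x (lift ord0 i)) => [|[|//]] _.
  by left; apply: axis_ptE => j; case: (eqVneq j i) => [->|/x0].
by right; apply: arm_ptE.
Qed.

Lemma padd_ebasis_ord0 : padd (ebasis k.+1 0) (ebasis k.+1 (@ord0 k)) = axis_pt 2.
Proof. by apply: pt_lift_ext => [|j]; rewrite !ffunE ?axis_pt0 ?axis_ptS. Qed.

Lemma padd_ebasis_lift j : padd (ebasis k.+1 0) (ebasis k.+1 (lift ord0 j)) = arm_pt 1 j.
Proof. by apply: pt_lift_ext => [|j']; rewrite !ffunE ?arm_pt0 ?arm_ptS. Qed.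

Lemma padd_ebasisP x :
  (exists i : 'I_k.+1, x = padd (ebasis k.+1 0) (ebasis k.+1 i)) <->
  x = axis_pt 2 \/ exists j, x = arm_pt 1 j.
Proof.
split=> [[i ->]|[->|[j ->]]].
- case: (unliftP ord0 i) => [j|] ->; last by rewrite padd_ebasis_ord0; left.
  by rewrite padd_ebasis_lift; right; exists j.
- by exists ord0; rewrite padd_ebasis_ord0.
- by exists (lift ord0 j); rewrite padd_ebasis_lift.
Qed.

End Points.

Arguments axis_pt {k}.

Lemma count_iota_eq d N : count (pred1 d) (iota 0 N) = (d < N).
Proof. by rewrite count_uniq_mem ?iota_uniq // mem_iota. Qed.

Lemma count_iota_ge d N : count (leq d) (iota 0 N) = N - d.
Proof.
elim: N => // N IH; rewrite -addn1 iotaD count_cat IH /= add0n addn0.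
by case: leqP; lia.
Qed.

Lemma card_fset_sep (T : choiceType) (s : seq T) (P : pred T) : uniq s ->
  #|` [fset x in [fset y in s] | P x]| = count P s.
Proof.
move=> s_uniq; have -> : [fset x in [fset y in s] | P x] = [fset x in filter P s].
  by apply/fsetP => x; rewrite !inE mem_filter andbC.
by rewrite card_fseq undup_id ?size_filter // filter_uniq.
Qed.

Lemma in_layer_eq n (lam : {fset pt n}) d x :
  (x \in layer_eq lam d) = (x \in lam) && (pdeg x == d).
Proof. by rewrite !inE. Qed.

Lemma in_layer_ge n (lam : {fset pt n}) d x :
  (x \in layer_ge lam d) = (x \in lam) && (d <= pdeg x).
Proof. by rewrite !inE. Qed.

Section Comb.

Variable k : nat.
Implicit Types (A a d : nat) (B : 'I_k -> nat) (x y : pt k.+1) (i : 'I_k).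

Definition comb_seq A B : seq (pt k.+1) :=
  [seq axis_pt a | a <- iota 0 A.+1] ++
  [seq arm_pt a i | i <- enum 'I_k, a <- iota 0 (B i).+1].

Definition comb A B : {fset pt k.+1} := [fset x in comb_seq A B].

Lemma comb_seq_uniq A B : uniq (comb_seq A B).
Proof.
rewrite cat_uniq map_inj_uniq ?iota_uniq //; last exact: axis_pt_inj.
apply/and3P; split => //.
  by apply/hasP => -[x /allpairsPdep[i [a [_ _ ->]]] /mapP[b _ /esym /axis_pt_neq_arm_pt]].
apply: allpairs_uniq_dep => [||[i a] [j b] _ _ /= /arm_pt_inj[-> ->]] //.
  exact: enum_uniq.
by move=> i _; apply: iota_uniq.
Qed.

Lemma mem_comb_axis A B a : (axis_pt a \in comb A B) = (a <= A).
Proof.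
rewrite in_fset mem_cat; apply/orP/idP => [[]|le_aA].
- by case/mapP => b; rewrite mem_iota => b_le /axis_pt_inj ->.
- by case/allpairsPdep => i [b [_ _ /axis_pt_neq_arm_pt]].
by left; apply/mapP; exists a; rewrite // mem_iota.
Qed.

Lemma mem_comb_arm A B a i : (arm_pt a i \in comb A B) = (a <= B i).
Proof.
rewrite in_fset mem_cat; apply/orP/idP => [[]|le_aB].
- by case/mapP => b _ /esym /axis_pt_neq_arm_pt.
- case/allpairsPdep => j [b [_ b_le /arm_pt_inj[-> ->]]].
  by rewrite mem_iota in b_le.
by right; apply/allpairsPdep; exists i, a; rewrite mem_enum mem_iota.
Qed.

Lemma combP A B x : x \in comb A B ->
  (exists2 a, a <= A & x = axis_pt a) \/ (exists i, exists2 a, a <= B i & x = arm_pt a i).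
Proof.
rewrite in_fset mem_cat => /orP[/mapP[a]|/allpairsPdep[i [a [_]]]]; rewrite mem_iota => a_le ->.
  by left; exists a.
by right; exists i, a.
Qed.

Lemma eq_comb A B B' : B =1 B' -> comb A B = comb A B'.
Proof.
move=> eq_B; apply/fsetP => x; apply/idP/idP => /combP[[a le_aA ->]|[i [a le_aB ->]]].
- by rewrite mem_comb_axis.
- by rewrite mem_comb_arm -eq_B.
- by rewrite mem_comb_axis.
- by rewrite mem_comb_arm eq_B.
Qed.

Lemma comb_inj A A' B B' : comb A B = comb A' B' -> A = A' /\ B =1 B'.
Proof.
move=> eq_comb.
have axisE a : (a <= A) = (a <= A') by rewrite -(mem_comb_axis A B) eq_comb mem_comb_axis.
have armE i a : (a <= B i) = (a <= B' i) by rewrite -(mem_comb_arm A) eq_comb mem_comb_arm.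
split=> [|i]; apply/eqP; rewrite eqn_leq.
  by rewrite -axisE leqnn axisE leqnn.
by rewrite -armE leqnn armE leqnn.
Qed.

Lemma count_comb_seq A B (P : pred (pt k.+1)) :
  count P (comb_seq A B) = count (P \o axis_pt) (iota 0 A.+1) +
    \sum_(i < k) count (fun a => P (arm_pt a i)) (iota 0 (B i).+1).
Proof.
rewrite count_cat count_map count_flatten sumnE !big_map -enumT big_enum.
by congr (_ + _); apply: eq_bigr => i _; rewrite count_map.
Qed.

Lemma card_comb A B : #|` comb A B| = A.+1 + \sum_(i < k) (B i).+1.
Proof.
rewrite card_fseq undup_id ?comb_seq_uniq // -count_predT count_comb_seq !count_predT size_iota.
by under eq_bigr do rewrite count_predT size_iota.
Qed.

Lemma hfun_comb A B d : hfun (comb A B) d.+1 = (d < A) + \sum_(i < k) (d <= B i).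
Proof.
rewrite /hfun card_fset_sep ?comb_seq_uniq // count_comb_seq.
under eq_count do rewrite /= pdeg_axis_pt.
under eq_bigr do under eq_count do rewrite pdeg_arm_pt eqSS.
rewrite (@eq_count _ _ (pred1 d.+1)) // count_iota_eq ltnS.
by under eq_bigr do rewrite count_iota_eq ltnS.
Qed.

Lemma layer_ge_comb A B d :
  #|` layer_ge (comb A B) d.+1| = A - d + \sum_(i < k) ((B i).+1 - d).
Proof.
rewrite /layer_ge card_fset_sep ?comb_seq_uniq // count_comb_seq.
under eq_count do rewrite /= pdeg_axis_pt.
under eq_bigr do under eq_count do rewrite pdeg_arm_pt ltnS.
rewrite count_iota_ge subSS.
by under eq_bigr do rewrite count_iota_ge.
Qed.

Lemma comb_down_closed A B : (forall i, B i <= A) -> down_closed (comb A B).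
Proof.
move=> le_BA x y /combP[[a le_aA ->]|[i [a le_aB ->]]].
  by move=> /ple_axis_ptr[x_eq le_xa]; rewrite x_eq mem_comb_axis (leq_trans le_xa).
move=> /ple_arm_ptr[le_xa [->|->]]; rewrite ?mem_comb_axis ?mem_comb_arm.
  exact: leq_trans le_xa (leq_trans le_aB (le_BA i)).
exact: leq_trans le_xa le_aB.
Qed.

Lemma is_soc_comb_arm A B i : is_soc (comb A B) (arm_pt (B i) i).
Proof.
split=> [|y /combP[[a _ ->]|[j [a le_aB ->]]]]; first by rewrite mem_comb_arm.
  by rewrite ple_arm_ptl axis_ptS andbF.
rewrite ple_arm_ptl arm_pt0 arm_ptS => /andP[le_Ba]; case: eqP le_Ba => // -> le_Ba _.
by congr arm_pt; apply/eqP; rewrite eqn_leq le_aB le_Ba.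
Qed.

Lemma soc_combE A B x : is_soc (comb A B) x ->
  (x = axis_pt A /\ forall i, B i < A) \/ exists i, x = arm_pt (B i) i.
Proof.
move=> [/combP[[a le_aA ->]|[i [a le_aB ->]]] x_max]; [left|right; exists i].
  have a_eq : a = A.
    case: (ltnP a A) => [lt_aA|]; last by move=> le_Aa; apply/eqP; rewrite eqn_leq le_aA.
    have := x_max (axis_pt a.+1); rewrite mem_comb_axis ple_axis_ptl axis_pt0.
    by move=> /(_ lt_aA (leqnSn a)) /axis_pt_inj; lia.
  split=> [|i]; first by rewrite a_eq.
  rewrite ltnNge; apply/negP => le_AB.
  have := x_max (arm_pt A i); rewrite mem_comb_arm ple_axis_ptl arm_pt0 a_eq.
  by move=> /(_ le_AB (leqnn A)) /esym /axis_pt_neq_arm_pt.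
case: (ltnP a (B i)) => [lt_aB|le_Ba]; last by congr arm_pt; apply/eqP; rewrite eqn_leq le_aB.
have := x_max (arm_pt a.+1 i); rewrite mem_comb_arm ple_arm_ptl arm_pt0 arm_ptS eqxx.
by move=> /(_ lt_aB) /=; rewrite leqnSn => /(_ isT) /arm_pt_inj[]; lia.
Qed.

Lemma mem_layer_eq2_comb A B x : 2 <= A -> (forall i, 0 < B i) ->
  x \in layer_eq (comb A B) 2 <-> x = axis_pt 2 \/ exists i, x = arm_pt 1 i.
Proof.
move=> le2A B_gt0; rewrite in_layer_eq; split=> [/andP[]|[->|[i ->]]].
- case/combP=> [[a _ ->]|[i [a _ ->]]].
    by rewrite pdeg_axis_pt => /eqP ->; left.
  by rewrite pdeg_arm_pt => /eqP[->]; right; exists i.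
- by rewrite mem_comb_axis pdeg_axis_pt le2A.
- by rewrite mem_comb_arm pdeg_arm_pt B_gt0.
Qed.

Lemma comb_delta_set A B :
  2 <= A -> (forall i, 2 <= B i <= A) -> 0 < A - 2 + \sum_(i < k) (B i - 1) ->
  delta_set k.+1 (A - 2 + \sum_(i < k) (B i - 1)) (comb A B).
Proof.
move=> le2A hB; set m := _ + _ => m_gt0.
have le_BA i : B i <= A by case/andP: (hB i).
have le2B i : 2 <= B i by case/andP: (hB i).
split=> [|x]; last first.
  by rewrite padd_ebasisP; apply: mem_layer_eq2_comb => // i; apply: leq_trans (le2B i).
split; first by rewrite m_gt0.
split.
- split; first exact: comb_down_closed.
  have sumB : \sum_(i < k) (B i).+1 = \sum_(i < k) (B i - 1 + 2).
    by apply: eq_bigr => i _; have := le2B i; lia.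
  rewrite card_comb sumB big_split /= sum_nat_const card_ord /m.
  by move: (\sum_(i < k) (B i - 1)) => S; lia.
- move=> x /soc_combE[[-> lt_BA]|[i ->]]; rewrite in_layer_ge.
    rewrite mem_comb_axis pdeg_axis_pt leqnn /=.
    case: (posnP k) => [k0|k_gt0]; last exact: leq_ltn_trans (le2B (Ordinal k_gt0)) (lt_BA _).
    have sum0 : \sum_(i < k) (B i - 1) = 0.
      by apply: big1 => -[i lt_ik]; exfalso; rewrite k0 in lt_ik.
    by move: m_gt0; rewrite /m sum0; lia.
  by rewrite mem_comb_arm pdeg_arm_pt leqnn ltnS le2B.
- by rewrite hfun_comb (leq_trans _ le2A) // sum_nat_const card_ord muln1.
- rewrite hfun_comb le2A add1n; congr _.+1.
  by rewrite -[RHS]card_ord -sum1_card; apply: eq_bigr => i _; rewrite (leq_trans _ (le2B i)).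
- by rewrite layer_ge_comb; under eq_bigr do rewrite subSS.
Qed.

End Comb.

Lemma bounded_downset_nat (P : pred nat) N :
  P 0 -> (forall a b, a <= b -> P b -> P a) -> (forall a, P a -> a <= N) ->
  exists A, forall a, P a = (a <= A).
Proof.
move=> P0 P_down P_bnd; have exP : exists a, P a by exists 0.
case: (ex_maxnP exP P_bnd) => A PA A_max; exists A => a.
by apply/idP/idP => [/A_max|le_aA]; last exact: P_down le_aA PA.
Qed.

Section DeltaSet.

Variable k : nat.
Implicit Types (A a : nat) (B : 'I_k -> nat) (x y : pt k.+1) (i j : 'I_k).

Definition arm2_pt i j : pt k.+1 :=
  [ffun l => nat_of_bool (l == lift ord0 i) + nat_of_bool (l == lift ord0 j)].

Lemma pdeg_arm2_pt i j : pdeg (arm2_pt i j) = 2.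
Proof.
rewrite pdeg_lift ffunE /=; under eq_bigr do rewrite ffunE !(inj_eq (@lift_inj _ ord0)).
by rewrite big_split /= !sum_indicator.
Qed.

Lemma ple_arm2_pt i j x :
  0 < x (lift ord0 i) -> 0 < x (lift ord0 j) -> (i = j -> 1 < x (lift ord0 i)) ->
  ple (arm2_pt i j) x.
Proof.
move=> xi_gt0 xj_gt0 xii_gt1; rewrite ple_lift ffunE /=; apply/forallP => l.
rewrite ffunE !(inj_eq (@lift_inj _ ord0)).
case: eqP => [->|_]; case: eqP => [eq_j|_] //=; rewrite ?addn0 //.
  exact: xii_gt1.
by rewrite eq_j.
Qed.

Lemma down_closed_axis_arm (lam : {fset pt k.+1}) :
  down_closed lam -> (forall y, y \in lam -> pdeg y = 2 -> 0 < y ord0) ->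
  forall x, x \in lam -> x = axis_pt (x ord0) \/ exists i, x = arm_pt (x ord0) i.
Proof.
move=> lam_down deg2_pos x x_in.
have arm2_notin i j : arm2_pt i j \notin lam.
  by apply/negP => /deg2_pos /(_ (pdeg_arm2_pt i j)); rewrite ffunE.
case: (boolP [exists i, 0 < x (lift ord0 i)]) => [/existsP[i xi_gt0]|]; last first.
  rewrite negb_exists => /forallP x0; left; apply: axis_ptE => j.
  by have := x0 j; case: (x _).
have xi1 : x (lift ord0 i) = 1.
  case xi: (x (lift ord0 i)) xi_gt0 => [|[|n]] // _.
  by case/negP: (arm2_notin i i); apply: lam_down x_in _; apply: ple_arm2_pt; rewrite xi.
right; exists i; apply: arm_ptE => // j ji.
case xj: (x (lift ord0 j)) => [|n] //.
case/negP: (arm2_notin i j); apply: lam_down x_in _; apply: ple_arm2_pt; rewrite ?xi1 ?xj //.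
by move=> eq_ij; rewrite eq_ij eqxx in ji.
Qed.

Lemma down_closed_comb (lam : {fset pt k.+1}) :
  down_closed lam -> (forall y, y \in lam -> pdeg y = 2 -> 0 < y ord0) ->
  axis_pt 0 \in lam -> (forall i, arm_pt 0 i \in lam) -> exists A B, lam = comb A B.
Proof.
move=> lam_down deg2_pos axis0_in arm0_in.
have coord0_bnd x : x \in lam -> x ord0 <= \max_(y <- lam) y ord0.
  by move=> x_in; apply: (leq_bigmax_seq x).
have [A axisE] : exists A, forall a, (axis_pt a \in lam) = (a <= A).
  apply: (@bounded_downset_nat _ (\max_(y <- lam) y ord0)) => //.
    by move=> a b le_ab /lam_down; apply; rewrite ple_axis_ptl axis_pt0.
  by move=> a /coord0_bnd; rewrite axis_pt0.
have /fin_all_exists[B armE] : forall i, exists b, forall a, (arm_pt a i \in lam) = (a <= b).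
  move=> i; apply: (@bounded_downset_nat _ (\max_(y <- lam) y ord0)) => //.
    by move=> a b le_ab /lam_down; apply; rewrite ple_arm_ptl arm_pt0 arm_ptS eqxx le_ab.
  by move=> a /coord0_bnd; rewrite arm_pt0.
exists A, B; apply/fsetP => x.
apply/idP/idP => [x_in|/combP[[a le_aA ->]|[i [a le_aB ->]]]].
- case: (down_closed_axis_arm lam_down deg2_pos x_in) => [x_eq|[i x_eq]].
    by rewrite x_eq mem_comb_axis -axisE -x_eq.
  by rewrite x_eq mem_comb_arm -armE -x_eq.
- by rewrite axisE.
- by rewrite armE.
Qed.

Lemma delta_set_comb m (lam : {fset pt k.+1}) : delta_set k.+1 m lam ->
  exists A B, [/\ 2 <= A, forall i, 2 <= B i <= A,
                  m = A - 2 + \sum_(i < k) (B i - 1) & lam = comb A B].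
Proof.
move=> [[_ [[lam_down _] lam_soc _ _ lam_ge3]] lam2].
have lam2E x : x \in layer_eq lam 2 <-> x = axis_pt 2 \/ exists i, x = arm_pt 1 i.
  exact: iff_trans (lam2 x) (padd_ebasisP x).
have lam2_in x : x = axis_pt 2 \/ (exists i, x = arm_pt 1 i) -> x \in lam.
  by move=> /lam2E; rewrite in_layer_eq => /andP[].
have axis2_in : axis_pt 2 \in lam by apply: lam2_in; left.
have arm1_in i : arm_pt 1 i \in lam by apply: lam2_in; right; exists i.
have deg2_pos y : y \in lam -> pdeg y = 2 -> 0 < y ord0.
  move=> y_in y2; have /lam2E[->|[i ->]] : y \in layer_eq lam 2 by rewrite in_layer_eq y_in y2.
    by rewrite axis_pt0.
  by rewrite arm_pt0.
have [A [B lam_comb]] : exists A B, lam = comb A B.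
  apply: down_closed_comb => // [|i]; first by apply: lam_down axis2_in _; rewrite ple_axis_ptl.
  by apply: lam_down (arm1_in i) _; rewrite ple_arm_ptl arm_pt0 arm_ptS eqxx.
have le2B i : 2 <= B i.
  have := is_soc_comb_arm A B i; rewrite -lam_comb => /lam_soc.
  by rewrite in_layer_ge pdeg_arm_pt ltnS => /andP[].
exists A, B; split=> //.
- by rewrite -(mem_comb_axis A B) -lam_comb.
- move=> i; rewrite le2B -(mem_comb_axis A B) -lam_comb.
  apply: lam_down (arm_pt (B i) i) _ _; first by rewrite lam_comb mem_comb_arm.
  by rewrite ple_axis_ptl arm_pt0.
- by rewrite -lam_ge3 lam_comb layer_ge_comb; under eq_bigr do rewrite subSS.
Qed.

End DeltaSet.

Fixpoint nat_tuples k N : seq (seq nat) :=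
  if k is k'.+1 then [seq j :: t | j <- iota 0 N, t <- nat_tuples k' N] else [:: [::]].

Lemma mem_nat_tuples k N t : (t \in nat_tuples k N) = (size t == k) && all (gtn N) t.
Proof.
elim: k t => [|k IH] [|j t] //=; first by apply/allpairsPdep => -[? [? []]].
apply/allpairsPdep/idP => [[j' [t' [j'_in t'_in [-> ->]]]]|/andP[/eqP[size_t] /andP[lt_jN all_t]]].
  by move: j'_in t'_in; rewrite mem_iota IH => lt_j'N /andP[/eqP -> ->]; rewrite eqxx andbT.
by exists j, t; rewrite mem_iota IH size_t eqxx all_t.
Qed.

Lemma nat_tuples_uniq k N : uniq (nat_tuples k N).
Proof.
elim: k => [|k IH] //=; apply: allpairs_uniq_dep => [||[j t] [j' t'] _ _ /= [-> ->]] //.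
exact: iota_uniq.
Qed.

Lemma coef_geometric_exp N k d :
  (((\sum_(j < N) 'X^j) ^+ k : {poly int})`_d)%R = count (fun t => sumn t == d) (nat_tuples k N).
Proof.
elim: k d => [|k IH] d; first by rewrite expr0 coef1; case: d.
rewrite exprS mulr_suml coef_sum count_flatten sumnE !big_map -natz natr_sum.
rewrite -(big_mkord xpredT (fun j => ('X^j * _)`_d)%R) /index_iota subn0.
apply: eq_bigr => j _; rewrite coefXnM IH count_map natz.
case: ltnP => [lt_dj|le_jd]; last by congr Posz; apply: eq_count => t /=; apply/eqP/eqP; lia.
by rewrite (@eq_count _ _ pred0) ?count_pred0 // => t /=; apply/negbTE; lia.
Qed.

Section DeltaList.

Variables k m : nat.

Definition comb_of_tuple i (t : seq nat) : {fset pt k.+1} :=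
  comb i.+2 (fun j : 'I_k => (nth 0 t j).+2).

(* [0 < m] excludes the comb with A = 2 and no teeth, which solves the equation
   for k = m = 0 but is not an M-partition. *)
Definition delta_params : seq (nat * seq nat) :=
  [seq p <- [seq (i, t) | i <- iota 0 m.+1, t <- nat_tuples k i.+1] |
     (p.1 + k + sumn p.2 == m) && (0 < m)].

Definition delta_list := [seq comb_of_tuple p.1 p.2 | p <- delta_params].

Lemma mem_delta_params i t : ((i, t) \in delta_params) =
  [&& size t == k, all (gtn i.+1) t, i + k + sumn t == m & 0 < m].
Proof.
rewrite mem_filter -[(i, t).1]/i -[(i, t).2]/t.
apply/andP/and4P => [[/andP[/eqP sum_t m_gt0]]|[size_t all_t sum_t m_gt0]].
  case/allpairsPdep => i' [t' [_ t'_in [eq_i eq_t]]]; subst i' t'.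
  by move: t'_in; rewrite mem_nat_tuples => /andP[-> ->]; rewrite sum_t m_gt0.
split; first by rewrite sum_t m_gt0.
apply/allpairsPdep; exists i, t; rewrite mem_iota mem_nat_tuples size_t all_t.
by split=> //; move/eqP: sum_t; lia.
Qed.

Lemma sum_nth_succ (t : seq nat) : size t = k -> \sum_(j < k) (nth 0 t j).+1 = sumn t + k.
Proof.
move=> size_t; under eq_bigr do rewrite -addn1.
by rewrite big_split /= sum_nat_const card_ord muln1 -size_t sumnE (big_nth 0) big_mkord.
Qed.

Lemma delta_list_uniq : uniq delta_list.
Proof.
rewrite map_inj_in_uniq ?filter_uniq ?allpairs_uniq_dep //.
- exact: iota_uniq.
- by move=> i _; apply: nat_tuples_uniq.
- by move=> [i t] [i' t'] _ _ /= [-> ->].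
move=> [i t] [i' t']; rewrite !mem_delta_params.
move=> /and4P[/eqP size_t _ _ _] /and4P[/eqP size_t' _ _ _] /comb_inj[[->] eq_nth].
congr pair; apply: (@eq_from_nth _ 0) => [|j]; first by rewrite size_t size_t'.
by rewrite size_t => lt_jk; have [] := eq_nth (Ordinal lt_jk).
Qed.

Lemma mem_delta_list lam : lam \in delta_list <-> delta_set k.+1 m lam.
Proof.
split=> [/mapP[[i t]]|lam_delta].
  rewrite mem_delta_params => /and4P[/eqP size_t /allP lt_t /eqP sum_t m_gt0] ->.
  have eq_m : m = i.+2 - 2 + \sum_(j < k) ((nth 0 t j).+2 - 1).
    by under eq_bigr do rewrite subSS subn0; rewrite sum_nth_succ // -sum_t; lia.
  rewrite /comb_of_tuple eq_m; apply: comb_delta_set => // [j|]; last by rewrite -eq_m.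
  by rewrite !ltnS -ltnS; apply: lt_t; rewrite mem_nth ?size_t.
have [[[_ _ m_gt0] _] _] := lam_delta.
case/delta_set_comb: lam_delta => A [B [le2A hB eq_m ->]].
pose t := [seq B j - 2 | j <- enum 'I_k].
have size_t : size t = k by rewrite size_map size_enum_ord.
have eq_B (j : 'I_k) : B j = (nth 0 t j).+2.
  by rewrite (nth_map j) ?nth_ord_enum ?size_enum_ord //; have := hB j; lia.
apply/mapP; exists (A - 2, t); last first.
  have eq_A : (A - 2).+2 = A by lia.
  by rewrite /comb_of_tuple /= eq_A; apply: eq_comb.
rewrite mem_delta_params size_t eqxx m_gt0 andbT /=; apply/andP; split.
  by apply/allP => _ /mapP[j _ ->] /=; have := hB j; lia.
have sumB : \sum_(j < k) (B j - 1) = sumn t + k.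
  by rewrite -(sum_nth_succ size_t); apply: eq_bigr => j _; rewrite eq_B subSS subn0.
by rewrite eq_m sumB; apply/eqP; lia.
Qed.

Lemma size_delta_list : 0 < m ->
  size delta_list = \sum_(i < m.+1) count (fun t => i + k + sumn t == m) (nat_tuples k i.+1).
Proof.
move=> m_gt0; rewrite size_map size_filter count_flatten sumnE !big_map.
rewrite -(big_mkord xpredT (fun i => count (fun t => i + k + sumn t == m) (nat_tuples k i.+1))).
rewrite /index_iota subn0.
by apply: eq_bigr => i _; rewrite count_map; apply: eq_count => t; rewrite /= m_gt0 andbT.
Qed.

End DeltaList.

Lemma delta_list0 k : delta_list k 0 = [::].
Proof.
by rewrite /delta_list /delta_params (@eq_filter _ _ pred0) ?filter_pred0 // => p; rewrite andbF.
Qed.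

Lemma size_delta_list_coef k m : 0 < m ->
  ((size (delta_list k m))%:Z =
   (\sum_(i < m.+1) 'X^(i + k) * (\sum_(j < i.+1) 'X^j) ^+ k : {poly int})`_m)%R.
Proof.
move=> m_gt0; rewrite size_delta_list // -natz natr_sum coef_sum.
apply: eq_bigr => i _; rewrite natz coefXnM coef_geometric_exp.
case: ltnP => [lt_m|le_m]; last by congr Posz; apply: eq_count => t /=; apply/eqP/eqP; lia.
by rewrite (@eq_count _ _ pred0) ?count_pred0 // => t /=; apply/negbTE; lia.
Qed.

Theorem lemma5p8 (n m : nat) : (0 < n)%N ->
  exists s : seq {fset {ffun 'I_n -> nat}},
    [/\ uniq s,
        (forall lam, lam \in s <-> delta_set n m lam) &
        ((size s)%:Z =
          (if n == 1%N then
             (\sum_(1 <= i < m.+1) 'X^i : {poly int})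
           else
             \sum_(1 <= i < m.+1)
               'X^(i + n - 2) * (\sum_(j < i) 'X^j) ^+ (n - 1))`_m)%R].
Proof.
case: n => // k _; exists (delta_list k m).
split; [exact: delta_list_uniq | exact: mem_delta_list |].
case: m => [|m]; first by rewrite delta_list0 !big_geq // if_same coef0.
rewrite size_delta_list_coef //; case: k => [|k] /=; rewrite big_add1 /= big_mkord.
  under eq_bigr do rewrite expr0 mulr1 addn0.
  by rewrite [in LHS]big_ord_recl coefD coefXn add0r.
rewrite big_ord_recr coefD coefXnM addnS ltnS leq_addr addr0 coef_sum [RHS]coef_sum.
apply: eq_bigr => i _ /=; congr (('X^_ * _ ^+ _)`_m.+1)%R; lia.
Qed.
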